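(* Let $G$ be a finite simple graph with adjacency matrix $A$ and let $W$ be a vertex subset that induces a regular subgraph, such that every vertex outside $W$ is adjacent to exactly $|W|$, $\tfrac12|W|$ or $0$ vertices of $W$. Let $G_W$ be the graph obtained by Godsil–McKay switching with respect to $W$, with adjacency matrix $A_W$. Then $\mathrm{2\text{-}rank}(G_W)\in\{\mathrm{2\text{-}rank}(G)-2,\ \mathrm{2\text{-}rank}(G),\ \mathrm{2\text{-}rank}(G)+2\}$. Moreover, if $\mathrm{2\text{-}rank}(G_W)=\mathrm{2\text{-}rank}(G)+2$, then $\mathrm{Col}_2(A)\subset\mathrm{Col}_2(A_W)$; in particular $\mathbf{1}\in\mathrm{Col}_2(A)$ then implies $\mathbf{1}\in\mathrm{Col}_2(A_W)$.
   Context: The 2-rank of a graph is the rank over $\mathbb{F}_2$ of its adjacency matrix; $\mathrm{Col}_2(M)$ is the column space of $M$ over $\mathbb{F}_2$, and $\mathbf{1}$ is the all-ones vector. Godsil–McKay switching with respect to $W$ (under the stated hypotheses on $W$): for each vertex $v\notin W$ having exactly $\tfrac12|W|$ neighbours in $W$, delete the $\tfrac12|W|$ edges between $v$ and $W$ and join $v$ instead to the other $\tfrac12|W|$ vertices of $W$; all other adjacencies are unchanged. *)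

From HB Require Import structures.
From mathcomp Require Import all_boot all_order all_algebra.
Set Implicit Arguments. Unset Strict Implicit. Unset Printing Implicit Defensive.
Import GRing.Theory.
Local Open Scope ring_scope.

Definition simple_graph (T : finType) (e : rel T) : Prop :=
  symmetric e /\ irreflexive e.

Definition nbrs_in (T : finType) (e : rel T) (W : {set T}) (v : T) : {set T} :=
  [set u in W | e v u].

Definition gm_switched (T : finType) (e : rel T) (W : {set T}) (v : T) : bool :=
  (v \notin W) && (2 * #|nbrs_in e W v| == #|W|)%N.

Definition gm_switch (T : finType) (e : rel T) (W : {set T}) : rel T :=
  fun x y =>
    if (gm_switched e W x && (y \in W)) || (gm_switched e W y && (x \in W))
    then ~~ e x y else e x y.

Definition adjF2 (T : finType) (e : rel T) : 'M['F_2]_#|T| :=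
  \matrix_(i, j) (e (enum_val i) (enum_val j))%:R.

Definition rank2 (T : finType) (e : rel T) : nat := \rank (adjF2 e).

Definition in_col2 (n : nat) (v : 'cV['F_2]_n) (M : 'M['F_2]_n) : bool :=
  (v^T <= M^T)%MS.

Definition col2_sub (n : nat) (M N : 'M['F_2]_n) : bool := (M^T <= N^T)%MS.

(* Switching with respect to W adds to the adjacency matrix A the symmetric
   term w^T s + s^T w, where w and s are the indicator vectors of W and of the
   switched vertices; hence the 2-ranks of G and G_W differ by at most 2.
   Over F_2 the adjacency matrix of a simple graph is alternating, and
   alternating matrices have even rank (eliminate a nonzero entry A p q
   together with its mirror A q p, which drops the rank by exactly 2).
   If the rank goes up by 2, then Row(A_W) <= Row(A) + <w, s> has dimension
   rank A + 2 and must be all of it, so Row(A) <= Row(A_W); symmetry turns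
   rows into columns. *)

From HB Require Import structures.
From mathcomp Require Import all_boot all_order all_algebra.
From mathcomp Require Import zify ring.
Set Implicit Arguments. Unset Strict Implicit. Unset Printing Implicit Defensive.
Import GRing.Theory.
Local Open Scope ring_scope.

Section FieldMatrices.
Variable F : fieldType.

Lemma mxrank_addr_ge m n (X Y : 'M[F]_(m, n)) :
  (\rank X <= \rank (X + Y)%R + \rank Y)%N.
Proof.
rewrite -(mxrank_opp Y); have := mxrank_add (X + Y) (- Y).
by rewrite addrK.
Qed.

Lemma mxrank_outer2 m n (u1 u2 : 'cV[F]_m) (v1 v2 : 'rV[F]_n) :
  (\rank (u1 *m v1 + u2 *m v2)%R <= 2)%N.
Proof.
have rank1 (u : 'cV[F]_m) (v : 'rV[F]_n) : (\rank (u *m v) <= 1)%N.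
  exact: leq_trans (mxrankM_maxr _ _) (rank_leq_row _).
exact: leq_trans (mxrank_add _ _) (leq_add (rank1 _ _) (rank1 _ _)).
Qed.

Lemma mxrank_adds_annihilated m1 m2 n k (X : 'M[F]_(m1, n)) (C : 'M_(m2, n))
    (M : 'M_(n, k)) :
  X *m M = 0 -> row_free (C *m M) -> \rank (X + C)%MS = (\rank X + m2)%N.
Proof.
move=> XM0 freeCM.
have freeC : row_free C.
  by rewrite /row_free eqn_leq rank_leq_row -{1}(eqP freeCM) mxrankM_maxl.
have capXC0 : (X :&: C)%MS = 0.
  case/submxP: (capmxSl X C) => D1 defX; case/submxP: (capmxSr X C) => D2 defC.
  have D2CM0 : D2 *m (C *m M) = 0 *m (C *m M).
    by rewrite mul0mx mulmxA -defC defX -mulmxA XM0 mulmx0.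
  by rewrite defC (row_free_inj freeCM D2CM0) mul0mx.
have := mxrank_sum_cap X C.
by rewrite capXC0 mxrank0 addn0 (eqP freeC).
Qed.

Lemma submx_of_rank_adds m1 m2 m3 n (A : 'M[F]_(m1, n)) (B : 'M_(m2, n))
    (U : 'M_(m3, n)) :
  (B <= A + U)%MS -> (\rank A + \rank U <= \rank B)%N -> (A <= B)%MS.
Proof.
move=> sBAU rankAU; apply: submx_trans (addsmxSl A U) _.
rewrite -(mxrank_leqif_sup sBAU).2 eqn_leq mxrankS //=.
exact: leq_trans (mxrank_adds_leqif A U).1 rankAU.
Qed.

Lemma submx_rank2_update n m (A B : 'M[F]_(m, n)) (u1 u2 : 'cV_m) (v1 v2 : 'rV_n) :
  B = A + (u1 *m v1 + u2 *m v2) -> \rank B = (\rank A + 2)%N -> (A <= B)%MS.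
Proof.
move=> defB rankB; apply: (submx_of_rank_adds (U := (v1 + v2)%MS)).
  have sv1 : (v1 <= A + (v1 + v2))%MS
    := submx_trans (addsmxSl _ _) (addsmxSr _ _).
  have sv2 : (v2 <= A + (v1 + v2))%MS
    := submx_trans (addsmxSr _ _) (addsmxSr _ _).
  rewrite defB; apply: addmx_sub; first exact: addsmxSl.
  by apply: addmx_sub; apply: submx_trans (submxMl _ _) _.
rewrite rankB leq_add2l; apply: leq_trans (mxrank_adds_leqif _ _).1 _.
exact: leq_add (rank_leq_row v1) (rank_leq_row v2).
Qed.

Definition alternating_mx n (A : 'M[F]_n) : Prop :=
  A^T = - A /\ forall i, A i i = 0.

Section Reduction.
Variables (n : nat) (A : 'M[F]_n) (p q : 'I_n).
Hypotheses (altA : alternating_mx A) (nz_pq : A p q != 0).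

Let a := A p q.

Lemma alternating_mxE i j : A j i = - A i j.
Proof.
by case: altA => skewA _; have := congr1 (fun M : 'M_n => M i j) skewA; rewrite !mxE.
Qed.

Definition alt_reduce : 'M[F]_n :=
  \matrix_(i, j) (A i j + a^-1 * (A i p * A q j - A i q * A p j)).

Lemma alt_reduce_update :
  alt_reduce = A + (a^-1 *: col p A) *m row q A - (a^-1 *: col q A) *m row p A.
Proof. by apply/matrixP => i j; rewrite !mxE !big_ord1 !mxE; ring. Qed.

Lemma alternating_alt_reduce : alternating_mx alt_reduce.
Proof.
case: altA => _ diagA; split=> [|i]; last first.
  by rewrite mxE diagA (alternating_mxE i q) (alternating_mxE i p); ring.
apply/matrixP => i j; rewrite !mxE.
rewrite (alternating_mxE i j) (alternating_mxE p j) (alternating_mxE q j).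
rewrite (alternating_mxE i p) (alternating_mxE i q); ring.
Qed.

Let sel (l : 'I_2) : 'I_n := if l == ord0 then p else q.

Lemma alt_reduce_sel : colsub sel alt_reduce = 0.
Proof.
case: altA => _ diagA; apply/matrixP => i l; rewrite !mxE /sel.
by case: ifP => _; rewrite diagA ?(alternating_mxE p q) -/a; field.
Qed.

Lemma pivot_block_unit : mxsub sel sel A \in unitmx.
Proof.
case: altA => _ diagA; set J := mxsub sel sel A.
have JJ : J *m J = (- (a * a))%:M.
  apply/matrixP => i j; rewrite !mxE big_ord_recl big_ord1 !mxE /sel /=.
  case: i => [[|[|?]] ?]; case: j => [[|[|?]] ?] //=;
    rewrite !diagA ?(alternating_mxE p q) -/a; ring.
have nzaa : - (a * a) != 0 by rewrite oppr_eq0 mulf_neq0.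
have JJinv : J *m ((- (a * a))^-1 *: J) = 1%:M.
  by rewrite -scalemxAr JJ scale_scalar_mx mulVf.
exact: (mulmx1_unit JJinv).1.
Qed.

(* alt_reduce vanishes on columns p and q, where rows p and q of A form the
   invertible block [[0, a], [-a, 0]]; so these rows add two dimensions. *)
Lemma alt_reduce_rank : \rank A = (\rank alt_reduce + 2)%N.
Proof.
have rank_update : (\rank A <= \rank alt_reduce + 2)%N.
  rewrite alt_reduce_update -addrA -mulNmx.
  set Y := (_ *m _ + _ *m _)%R.
  by apply: leq_trans (mxrank_addr_ge A Y) _; rewrite leq_add2l mxrank_outer2.
have sub_update : (alt_reduce <= A)%MS.
  rewrite alt_reduce_update; apply: addmx_sub; first apply: addmx_sub.
  - exact: submx_refl.
  - exact: submx_trans (submxMl _ _) (row_sub _ _).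
  - by rewrite eqmx_opp; exact: submx_trans (submxMl _ _) (row_sub _ _).
have rank_adds : \rank (alt_reduce + rowsub sel A)%MS = (\rank alt_reduce + 2)%N.
  apply: (mxrank_adds_annihilated (M := colsub sel 1%:M)).
    by rewrite mulmx_colsub mulmx1 alt_reduce_sel.
  by rewrite -mxsub_mul mulmx1 row_free_unit pivot_block_unit.
apply/eqP; rewrite eqn_leq rank_update -rank_adds mxrankS //.
by rewrite addsmx_sub sub_update rowsub_sub.
Qed.

End Reduction.

Lemma alternating_mx_rank_even n (A : 'M[F]_n) :
  alternating_mx A -> ~~ odd (\rank A).
Proof.
have [k] := ubnP (\rank A); elim: k A => // k IH A rankA altA.
have [->|/matrix0Pn[p [q nz_pq]]] := eqVneq A 0; first by rewrite mxrank0.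
move: rankA; rewrite (alt_reduce_rank altA nz_pq) oddD addbF => rankA.
by apply: IH (alternating_alt_reduce p q altA); lia.
Qed.

End FieldMatrices.

Lemma even_dist2_cases (a b : nat) :
  ~~ odd a -> ~~ odd b -> (b <= a + 2)%N -> (a <= b + 2)%N ->
  [\/ (b + 2 = a)%N, b = a | b = (a + 2)%N].
Proof.
move=> evena evenb ba ab.
have defa := odd_double_half a; have defb := odd_double_half b.
rewrite (negbTE evena) (negbTE evenb) /= !add0n -!mul2n in defa defb.
rewrite -defa -defb in ba ab *.
have : (b./2 + 1 = a./2 \/ b./2 = a./2 \/ b./2 = a./2 + 1)%N by lia.
by case=> [h|[h|h]]; [apply: Or31|apply: Or32|apply: Or33]; lia.
Qed.

Section Graphs.
Variable T : finType.
Implicit Types (e : rel T) (W : {set T}).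

Definition indF2 (P : {pred T}) : 'rV['F_2]_#|T| := \row_j (enum_val j \in P)%:R.

Lemma adjF2_tr e : symmetric e -> (adjF2 e)^T = adjF2 e.
Proof. by move=> sym_e; apply/matrixP => i j; rewrite !mxE sym_e. Qed.

Lemma adjF2_alternating e : simple_graph e -> alternating_mx (adjF2 e).
Proof.
case=> sym_e irr_e; split=> [|i]; last by rewrite mxE irr_e.
rewrite adjF2_tr //; apply/matrixP => i j.
by rewrite !mxE; case: (e _ _); apply/val_inj.
Qed.

Lemma gm_switch_simple e W : simple_graph e -> simple_graph (gm_switch e W).
Proof.
case=> sym_e irr_e; split=> [x y|x]; first by rewrite /gm_switch orbC sym_e.
by rewrite /gm_switch /gm_switched; case: (x \in W); rewrite /= ?andbF /= irr_e.
Qed.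

Lemma adjF2_gm_switch e W :
  adjF2 (gm_switch e W) = adjF2 e +
    ((indF2 W)^T *m indF2 (gm_switched e W) +
     (indF2 (gm_switched e W))^T *m indF2 W).
Proof.
have inS v : (v \in gm_switched e W) = gm_switched e W v by [].
apply/matrixP => i j; rewrite !mxE !big_ord1 !mxE !inS /gm_switch /gm_switched.
case: (enum_val i \in W); case: (enum_val j \in W);
case: (2 * #|nbrs_in e W (enum_val i)| == #|W|)%N;
case: (2 * #|nbrs_in e W (enum_val j)| == #|W|)%N;
by case: (e (enum_val i) (enum_val j)); apply/val_inj.
Qed.

End Graphs.

Theorem mainTheorem3 (T : finType) (e : rel T) (W : {set T}) :
  simple_graph e ->
  (exists k : nat, forall w, w \in W -> #|nbrs_in e W w| = k) ->
  (forall v, v \notin W ->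
     [\/ #|nbrs_in e W v| = #|W|, (2 * #|nbrs_in e W v| = #|W|)%N
       | #|nbrs_in e W v| = 0%N]) ->
  let eW := gm_switch e W in
  [\/ (rank2 eW + 2 = rank2 e)%N, rank2 eW = rank2 e
    | rank2 eW = (rank2 e + 2)%N] /\
  (rank2 eW = (rank2 e + 2)%N ->
     col2_sub (adjF2 e) (adjF2 eW) /\
     (in_col2 (const_mx 1) (adjF2 e) -> in_col2 (const_mx 1) (adjF2 eW))).
Proof.
move=> simple_e _ _ eW; have simple_eW := gm_switch_simple W simple_e.
have defB := adjF2_gm_switch e W; rewrite /rank2 -/eW in defB *.
set A := adjF2 e in defB *; set B := adjF2 eW in defB *.
set Y := (_ *m _ + _)%R in defB.
have rankY : (\rank Y <= 2)%N by apply: mxrank_outer2.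
have rankBA : (\rank B <= \rank A + 2)%N.
  by rewrite defB; apply: leq_trans (mxrank_add _ _) _; rewrite leq_add2l.
have rankAB : (\rank A <= \rank B + 2)%N.
  by rewrite defB; apply: leq_trans (mxrank_addr_ge A Y) _; rewrite leq_add2l.
split; first by apply: even_dist2_cases => //;
  apply: alternating_mx_rank_even; apply: adjF2_alternating.
move=> rankB; have sAB := submx_rank2_update defB rankB.
have [sym_e _] := simple_e; have [sym_eW _] := simple_eW.
rewrite /col2_sub /in_col2 !adjF2_tr //; split=> // one_in_A.
exact: submx_trans one_in_A sAB.
Qed.
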